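(* Let $\mathcal F_{n,s,d}$ denote the class of $s$-sparse polynomials $f:\{0,1\}^n\to\mathbb{R}$ of degree at most $d$ all of whose non-zero M\''obius coefficients lie in $[s]=\{1,2,\dots,s\}$. Any deterministic algorithm that recovers every $f\in\mathcal F_{n,s,d}$ from evaluation queries (queries $\mathbf x\in\{0,1\}^n$ answered by $f(\mathbf x)$) must use at least $$\Omega\!\left(\frac{sd\log(n/d)}{\log s}\right)$$ queries in the worst case.
   Context: Every $f:\{0,1\}^n\to\mathbb{R}$ has a unique expansion $f(\mathbf x)=\sum_{\mathbf k\in\{0,1\}^n,\ \mathbf k\le\mathbf x}F(\mathbf k)$ (real addition, $\le$ componentwise); the $F(\mathbf k)$ are its M\''obius coefficients. $f$ is $s$-sparse if at most $s$ of its M\''obius coefficients are non-zero, and has degree at most $d$ if every $\mathbf k$ with $F(\mathbf k)\ne0$ has Hamming weight at most $d$. *)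

From HB Require Import structures.
From mathcomp Require Import all_boot all_order all_algebra.
From mathcomp Require Import all_classical all_reals exp.
Set Implicit Arguments. Unset Strict Implicit. Unset Printing Implicit Defensive.
Import Order.TTheory GRing.Theory Num.Theory.
Local Open Scope ring_scope.

Definition cube (n : nat) := {ffun 'I_n -> bool}.

Definition cube_le n (k x : cube n) : bool := [forall i, k i ==> x i].

Definition weight n (k : cube n) : nat := #|[set i | k i]|.

Definition moebius_coeffs (R : realType) n (f : cube n -> R) (F : cube n -> R) :=
  forall x : cube n, f x = \sum_(k : cube n | cube_le k x) F k.

Definition in_class (R : realType) n (s d : nat) (f : cube n -> R) : Prop :=
  exists F : cube n -> R,
    [/\ moebius_coeffs f F,
        (#|[set k : cube n | (F k != 0)%R]| <= s)%N,
        (forall k, (F k != 0)%R -> (weight k <= d)%N) &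
        (forall k, (F k != 0)%R -> exists j : nat, (1 <= j <= s)%N /\ (F k = j%:R)%R)].

(* A deterministic adaptive query algorithm: the next query is chosen
   as a function of the answers obtained so far; after the queries the
   output is a function of all answers. *)
Fixpoint answers (R : realType) n (Q : seq R -> cube n) (f : cube n -> R)
    (q : nat) : seq R :=
  match q with
  | O => [::]
  | q'.+1 => let a := answers Q f q' in rcons a (f (Q a))
  end.

Definition recovers (R : realType) n (s d : nat) (Q : seq R -> cube n)
    (out : seq R -> cube n -> R) (q : nat) : Prop :=
  forall f : cube n -> R, in_class s d f ->
    forall x : cube n, out (answers Q f q) x = f x.

Definition num_monomials n (d : nat) : nat := #|[set k : cube n | (weight k <= d)%N]|.

From HB Require Import structures.
From mathcomp Require Import all_boot all_order all_algebra.
From mathcomp Require Import all_classical all_reals exp.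
From mathcomp Require Import zify lra.
Set Implicit Arguments. Unset Strict Implicit. Unset Printing Implicit Defensive.
Import Order.TTheory GRing.Theory Num.Theory.
Local Open Scope ring_scope.
Local Notation subsetP := fintype.subsetP.

(* Let M be the number of monomials of degree at most d and a = M %/ s.  Split s * a of
   these monomials into s blocks of size a; choosing in each block one monomial together
   with a coefficient in [s] gives (a s)^s distinct members of the class, all with values
   in {0, ..., s^2}.  A q-query algorithm sees at most (s^2 + 1)^q answer sequences, so
   (a s)^s <= (s^2 + 1)^q <= s^(3 q).  As n^d <= 'C(n, d) d^d <= M d^d <= (a s)^2 d^d,
   this gives (n / d)^(d s) <= s^(6 q), i.e. s d ln(n / d) <= 6 q ln s. *)

Lemma expn_le_bin_mul (n d : nat) : (d <= n)%N -> (n ^ d <= 'C(n, d) * d ^ d)%N.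
Proof.
move=> le_dn; rewrite -(leq_pmul2r (fact_gt0 d)) mulnAC bin_ffact -ffactnn.
have const_prod m : (m ^ d = \prod_(i < d) m)%N by rewrite prod_nat_const card_ord.
rewrite !ffact_prod !const_prod -!big_split /=.
by apply: leq_prod => i _; have := ltn_ord i; nia.
Qed.

Lemma bin_le_num_monomials (n d : nat) : ('C(n, d) <= num_monomials n d)%N.
Proof.
pose indicator (A : {set 'I_n}) : cube n := [ffun i => i \in A].
have indicator_inj : injective indicator.
  by move=> A B /ffunP eqAB; apply/setP => i; have := eqAB i; rewrite !ffunE.
rewrite -[n in 'C(n, _)]card_ord -card_draws -(card_imset _ indicator_inj).
apply: subset_leq_card; apply/subsetP => _ /imsetP [A + ->].
rewrite !inE /weight => /eqP <-; apply: eq_leq; apply: eq_card => i.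
by rewrite !inE ffunE.
Qed.

Lemma cube_le_refl n (k : cube n) : cube_le k k.
Proof. by apply/forallP => i; apply/implyP. Qed.

Lemma weight_lt n (j k : cube n) : cube_le j k -> j != k -> (weight j < weight k)%N.
Proof.
move=> /forallP le_jk neq_jk.
have sub_jk : [set i | j i] \subset [set i | k i].
  by apply/subsetP => i; rewrite !inE; apply/implyP.
rewrite ltnNge; apply: contra neq_jk => le_kj.
have /eqP/setP eq_jk : [set i | j i] == [set i | k i] by rewrite eqEcard sub_jk.
by apply/eqP/ffunP => i; have := eq_jk i; rewrite !inE.
Qed.

(* Induction on the weight: below k, the two expansions at k differ only in the term k. *)
Lemma moebius_coeffs_unique (R : realType) n (f : cube n -> R) (F G : cube n -> R) :
  moebius_coeffs f F -> moebius_coeffs f G -> F =1 G.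
Proof.
move=> fF fG k; elim: {k}(weight k).+1 {-2}k (ltnSn (weight k)) => [//|w IH] k lt_kw.
have := fF k; rewrite fG !(bigD1 (P := fun j => cube_le j k) k (cube_le_refl k)) /=.
rewrite [in RHS](eq_bigr G) => [/addIr -> //|j /andP [le_jk neq_jk]].
by apply: IH; apply: leq_trans (weight_lt le_jk neq_jk) _.
Qed.

Section Queries.
Variables (R : realType) (n : nat) (Q : seq R -> cube n).

Lemma size_answers (f : cube n -> R) q : size (answers Q f q) = q.
Proof. by elim: q => //= q IH; rewrite size_rcons IH. Qed.

Lemma nth_answers (f : cube n -> R) q i : (i < q)%N ->
  exists x, nth 0 (answers Q f q) i = f x.
Proof.
elim: q => // q IH; rewrite ltnS leq_eqVlt /= nth_rcons size_answers.
case/orP=> [/eqP -> | lt_iq]; first by rewrite ltnn eqxx; eexists.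
by rewrite lt_iq; exact: IH.
Qed.

Lemma recovers_answers_inj s d out q (f g : cube n -> R) :
  recovers s d Q out q -> in_class s d f -> in_class s d g ->
  answers Q f q = answers Q g q -> f = g.
Proof.
by move=> rec cf cg eq_ans; apply/funext => x; rewrite -(rec f cf) eq_ans rec.
Qed.

Lemma recovers_card_le s d out q (T : finType) (fam : T -> cube n -> R) (m : nat) :
  recovers s d Q out q -> (forall t, in_class s d (fam t)) -> injective fam ->
  (forall t x, exists2 k, (k <= m)%N & fam t x = k%:R) ->
  (#|T| <= m.+1 ^ q)%N.
Proof.
move=> rec fam_class fam_inj fam_nat.
pose code t := [ffun i : 'I_q =>
  inord (Num.truncn (nth 0 (answers Q (fam t) q) i)) : 'I_m.+1].
suff /leq_card : injective code by rewrite card_ffun !card_ord.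
move=> t t' /ffunP eq_code; apply/fam_inj/(recovers_answers_inj rec) => //.
apply: (@eq_from_nth _ 0); rewrite !size_answers // => i lt_iq.
have nat_answer u : exists2 k, (k <= m)%N & nth 0 (answers Q (fam u) q) i = k%:R.
  by have [x ->] := nth_answers (fam u) lt_iq; exact: fam_nat.
have := eq_code (Ordinal lt_iq); rewrite !ffunE /=.
have [k le_km ->] := nat_answer t; have [k' le_k'm ->] := nat_answer t'.
by rewrite !natrK => /(congr1 val); rewrite /= !inordK ?ltnS // => ->.
Qed.

End Queries.

Section BlockFamily.
Variables (R : realType) (n s a d : nat) (e : 'I_s * 'I_a -> cube n).
Hypotheses (e_inj : injective e) (e_weight : forall b, (weight (e b) <= d)%N).

Definition block_coeff (p : {ffun 'I_s -> 'I_a * 'I_s}) (k : cube n) : nat :=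
  \sum_(i < s) if k == e (i, (p i).1) then (p i).2.+1 else 0.

Definition block_poly (p : {ffun 'I_s -> 'I_a * 'I_s}) (x : cube n) : R :=
  \sum_(k | cube_le k x) (block_coeff p k)%:R.

Lemma block_coeff_at p i : block_coeff p (e (i, (p i).1)) = (p i).2.+1.
Proof.
rewrite /block_coeff (bigD1 i) //= eqxx big1 ?addn0 // => j neq_ji.
by case: eqP => // /e_inj [] /eqP; rewrite eq_sym (negbTE neq_ji).
Qed.

Lemma block_coeff_support p k :
  block_coeff p k != 0%N -> exists i, k = e (i, (p i).1).
Proof.
have [/existsP [i /eqP ->] _ | ] := boolP [exists i, k == e (i, (p i).1)].
  by exists i.
rewrite negb_exists => /forallP neq_k; rewrite /block_coeff big1 ?eqxx // => i _.
by rewrite (negbTE (neq_k i)).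
Qed.

Lemma sum_block_coeff p : (\sum_k block_coeff p k <= s * s)%N.
Proof.
rewrite exchange_big /=.
rewrite (eq_bigr (fun i => (p i).2.+1)) => [|i _]; last first.
  by rewrite (bigD1 (e (i, (p i).1))) //= eqxx big1 ?addn0 // => k /negbTE ->.
by rewrite -[X in (_ <= X * _)%N]card_ord -sum_nat_const leq_sum.
Qed.

Lemma block_poly_nat p x :
  exists2 m, (m <= s * s)%N & block_poly p x = m%:R.
Proof.
exists (\sum_(k | cube_le k x) block_coeff p k)%N; last by rewrite natr_sum.
apply: leq_trans (sum_block_coeff p).
by rewrite [X in (_ <= X)%N](bigID (fun k => cube_le k x)) leq_addr.
Qed.

Lemma block_poly_in_class p : in_class s d (block_poly p).
Proof.
exists (fun k => (block_coeff p k)%:R); split=> [//||k|k]; rewrite ?pnatr_eq0.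
- apply: (@leq_trans #|[set e (i, (p i).1) | i : 'I_s]|).
    apply: subset_leq_card; apply/subsetP => k.
    by rewrite inE pnatr_eq0 => /block_coeff_support [i ->]; apply: imset_f.
  by apply: leq_trans (leq_imset_card _ _) _; rewrite card_ord.
- by case/block_coeff_support=> i ->.
- case/block_coeff_support=> i ->; exists (p i).2.+1.
  by rewrite block_coeff_at ltn_ord.
Qed.

Lemma block_coeff_inj p p' : block_coeff p =1 block_coeff p' -> p = p'.
Proof.
move=> eq_pp'; apply/ffunP => i.
have /block_coeff_support [j /e_inj [eq_ij eq_pi1]] :
    block_coeff p' (e (i, (p i).1)) != 0%N by rewrite -eq_pp' block_coeff_at.
rewrite -eq_ij in eq_pi1.
have := block_coeff_at p' i; rewrite -eq_pi1 -eq_pp' block_coeff_at => -[eq_pi2].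
by rewrite [p i]surjective_pairing [p' i]surjective_pairing eq_pi1 (val_inj eq_pi2).
Qed.

Lemma block_poly_inj : injective block_poly.
Proof.
move=> p p' eq_poly; apply: block_coeff_inj => k; apply/eqP; rewrite -(eqr_nat R).
apply/eqP; apply: (@moebius_coeffs_unique R n (block_poly p)
  (fun k => (block_coeff p k)%:R) (fun k => (block_coeff p' k)%:R)) => // x.
by rewrite eq_poly.
Qed.

Lemma block_query_bound q (Q : seq R -> cube n) (out : seq R -> cube n -> R) :
  recovers s d Q out q -> ((a * s) ^ s <= (s * s).+1 ^ q)%N.
Proof.
move=> rec; have := recovers_card_le rec block_poly_in_class block_poly_inj block_poly_nat.
by rewrite card_ffun card_prod !card_ord mulnC.
Qed.

End BlockFamily.

Lemma low_weight_embedding n d (T : finType) : (#|T| <= num_monomials n d)%N ->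
  exists2 e : T -> cube n, injective e & forall t, (weight (e t) <= d)%N.
Proof.
move=> le_T; exists (fun t => @enum_val _ (mem [set k : cube n | weight k <= d]%N)
                                 (widen_ord le_T (enum_rank t))).
  by move=> t t' /enum_val_inj /(congr1 val) /= /val_inj; exact: enum_rank_inj.
by move=> t; have := enum_valP (widen_ord le_T (enum_rank t)); rewrite inE.
Qed.

Lemma leq_expn2r (m m' e : nat) : (m <= m')%N -> (m ^ e <= m' ^ e)%N.
Proof. by move=> le_mm'; elim: e => // e IH; rewrite !expnS leq_mul. Qed.

Lemma query_expn_bound (n d s q M A : nat) : (2 <= s)%N ->
  (n ^ d <= M * d ^ d)%N -> (M <= A ^ 2)%N -> (A ^ s <= (s * s).+1 ^ q)%N ->
  (n ^ (d * s) <= s ^ (6 * q) * d ^ (d * s))%N.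
Proof.
move=> le_2s le_nM le_MA le_As.
have le_sq_cube : ((s * s).+1 <= s ^ 3)%N by rewrite !expnS expn0; nia.
apply: (@leq_trans ((A ^ s) ^ 2 * d ^ (d * s))).
  rewrite !expnM (expnAC A) -expnMn; apply: leq_expn2r.
  by apply: leq_trans le_nM _; rewrite leq_mul2r le_MA orbT.
have -> : (s ^ (6 * q) = ((s ^ 3) ^ q) ^ 2)%N by rewrite -!expnM mulnA mulnAC.
by rewrite leq_mul // leq_expn2r // (leq_trans le_As) // leq_expn2r.
Qed.

Lemma ln_ratio_le (R : realType) (n d b k m : nat) : (0 < n)%N -> (0 < d)%N -> (0 < b)%N ->
  (n ^ k <= b ^ m * d ^ k)%N -> k%:R * ln (n%:R / d%:R : R) <= m%:R * ln b%:R.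
Proof.
move=> n_gt0 d_gt0 b_gt0 le_nbd.
rewrite !(mulr_natl (ln _)) -!lnXn ?divr_gt0 ?ltr0n //.
rewrite ler_ln ?posrE ?exprn_gt0 ?divr_gt0 ?ltr0n //.
by rewrite expr_div_n ler_pdivrMr ?exprn_gt0 ?ltr0n // -!natrX -natrM ler_nat.
Qed.

Theorem theorem3 (R : realType) :
  exists c : R, 0 < c /\
    forall (n s d : nat), (1 <= d <= n)%N -> (2 <= s)%N ->
      (s <= num_monomials n d)%N ->
      forall (q : nat) (Q : seq R -> cube n) (out : seq R -> cube n -> R),
        recovers s d Q out q ->
        c * (s%:R * d%:R * ln (n%:R / d%:R) / ln s%:R) <= q%:R.
Proof.
exists 6^-1; split=> [|n s d /andP [d_gt0 le_dn] le_2s le_sM q Q out rec].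
  by rewrite invr_gt0 ltr0n.
have s_gt0 : (0 < s)%N by apply: ltnW.
set M := num_monomials n d in le_sM; set a := (M %/ s)%N.
have [|e e_inj e_weight] := @low_weight_embedding n d ('I_s * 'I_a)%type.
  by rewrite card_prod !card_ord mulnC leq_divM.
have le_nM : (n ^ d <= M * d ^ d)%N.
  by apply: leq_trans (expn_le_bin_mul le_dn) _; rewrite leq_mul2r bin_le_num_monomials orbT.
have le_M_sq : (M <= (a * s) ^ 2)%N.
  have := divn_eq M s; have := ltn_pmod M s_gt0; have := divn_gt0 M s_gt0.
  by rewrite le_sM -/a; nia.
have := query_expn_bound le_2s le_nM le_M_sq (block_query_bound e_inj e_weight rec).
move=> /(ln_ratio_le R (leq_trans d_gt0 le_dn) d_gt0 s_gt0); rewrite !natrM.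
have ln_s_gt0 : 0 < ln (s%:R : R) by rewrite ln_gt0 // ltr1n.
by rewrite mulrA ler_pdivrMr //; lra.
Qed.
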